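(* Let $n\geq 2$ and let $L_n$ be the graph of linear $[n]$-phenylene (defined in the context). Then the base polynomial counting distances between pairs consisting of a degree-2 vertex and a degree-3 vertex of $L_n$ is \begin{eqnarray*} H^{2,3}_{b}(L_{n}) &=& 2(2n-2)x+4\sum_{k=2}^{n-1}(n-k+1)x^{3k-2}+4\sum_{k=1}^{n-1}(2n-2k+1)x^{3k-1}\\ &&+4\sum_{k=1}^{n-1}(n-k+2)x^{3k}+4x^{3n-2}. \end{eqnarray*}
   Context: All graphs are finite, simple and connected; $d(u,v)$ denotes the shortest-path distance and $d_u$ the degree of a vertex $u$. For a graph $G$ and degrees $p\le q$, the base polynomial is $H^{p,q}_{b}(G)=\sum x^{d(u,v)}$, where the sum runs over all unordered pairs $\{u,v\}$ of distinct vertices of $G$ such that one of $u,v$ has degree $p$ and the other has degree $q$. Linear $[n]$-phenylene $L_n$: take $n$ hexagons $H_1,\dots,H_n$; hexagon $H_i$ is the 6-cycle $a_i b_i c_i d_i e_i f_i a_i$. For each $i=1,\dots,n-1$ add the two edges $b_i f_{i+1}$ and $c_i e_{i+1}$, so that $b_i c_i e_{i+1} f_{i+1}$ is a 4-cycle joining consecutive hexagons. Thus $L_n$ has $6n$ vertices, $2n+4$ of degree 2 and $4n-4$ of degree 3. *)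

From mathcomp Require Import all_boot all_order all_algebra.
Set Implicit Arguments. Unset Strict Implicit. Unset Printing Implicit Defensive.
Import GRing.Theory.
Local Open Scope ring_scope.

(* A simple graph on a finite type T is given by a (symmetric, irreflexive)
   adjacency relation e : rel T. *)
Section Graph.
Variables (T : finType) (e : rel T).

Definition deg (u : T) : nat := #|[set v | e u v]|.

Fixpoint ball (k : nat) (u : T) : {set T} :=
  if k is k'.+1 then ball k' u :|: [set w | [exists v in ball k' u, e v w]]
  else [set u].

(* shortest-path distance: least k with v within k steps of u
   (the graphs considered are connected, so such k < #|T| exists) *)
Definition dist (u v : T) : nat := find (fun k => v \in ball k u) (iota 0 #|T|).

Definition base_poly (p q : nat) : {poly int} :=
  \sum_(uv : T * T | (enum_rank uv.1 < enum_rank uv.2)%N &&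
        (((deg uv.1 == p) && (deg uv.2 == q)) ||
         ((deg uv.1 == q) && (deg uv.2 == p))))
    'X^(dist uv.1 uv.2).
End Graph.

(* Linear [n]-phenylene: vertex (i, j) with j = 0..5 standing for
   a_i, b_i, c_i, d_i, e_i, f_i of hexagon H_{i+1}. *)
Definition phen_adj (n : nat) : rel ('I_n * 'I_6) :=
  fun u v =>
    let: (i, j) := u in let: (i', j') := v in
    [|| (i == i') && ((j' == (j + 1) %% 6 :> nat) || (j == (j' + 1) %% 6 :> nat)),
        (* b_i f_{i+1} *)
        (i'.+1 == i :> nat) && (j' == 1 :> nat) && (j == 5 :> nat),
        (i.+1 == i' :> nat) && (j == 1 :> nat) && (j' == 5 :> nat),
        (* c_i e_{i+1} *)
        (i'.+1 == i :> nat) && (j' == 2 :> nat) && (j == 4 :> nat)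
      | (i.+1 == i' :> nat) && (j == 2 :> nat) && (j' == 4 :> nat)]%N.
Arguments phen_adj : clear implicits.

From mathcomp Require Import all_boot all_order all_algebra zify ring.
Import GRing.Theory.
Set Implicit Arguments. Unset Strict Implicit.

(* Send a_i, b_i, f_i to the columns 3i+1, 3i+2, 3i of an upper row and
   d_i, c_i, e_i to the same columns of a lower row: L_n becomes the 2 x 3n
   ladder whose rungs sit at the columns not congruent to 1 mod 3.  Distances
   in this ladder have a closed form, which is identified with the graph
   distance by checking that it is a BFS potential.  The degree-3 vertices
   are those on interior rung columns, so a (2,3)-pair never shares a column,
   and the four pairs between columns c and c' contribute (2 + 2x) x^|c - c'|.
   The remaining sum over columns is evaluated hexagon by hexagon. *)

Lemma find_iota_leq d m N :
  m <= d < m + N -> find (fun k => d <= k) (iota m N) = d - m.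
Proof.
elim: N m => [|N IH] m /=; first lia.
by move=> dm; case: (leqP d m) => [|lt_md]; [lia | rewrite IH; lia].
Qed.

Section PotentialDistance.
Variables (T : finType) (e : rel T) (u : T) (D : T -> nat).
Hypotheses (D_eq0 : forall v, (D v == 0) = (v == u))
  (D_edge : forall v w, e v w -> D w <= (D v).+1)
  (D_pred : forall w, 0 < D w -> exists2 v, e v w & (D v).+1 = D w).

Lemma ball_potential k : ball e k u = [set v | D v <= k].
Proof.
elim: k => [|k IHk] /=; apply/setP => w; first by rewrite !inE leqn0 D_eq0.
rewrite IHk !inE; apply/idP/idP.
- case/orP => [/leqW //|/existsP[v /andP[]]].
  by rewrite inE => Dv /D_edge Dw; apply: leq_trans Dw _.
- rewrite leq_eqVlt ltnS orbC => /orP[-> //|/eqP Dw]; apply/orP; right.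
  have [v evw Dv] : exists2 v, e v w & (D v).+1 = D w by apply: D_pred; rewrite Dw.
  by apply/existsP; exists v; rewrite inE evw andbT -ltnS Dv Dw.
Qed.

Lemma dist_potential v : D v < #|T| -> dist e u v = D v.
Proof.
move=> Dv_lt; rewrite /dist (eq_find (a2 := fun k => D v <= k)).
  by rewrite find_iota_leq ?subn0.
by move=> k; rewrite ball_potential inE.
Qed.

End PotentialDistance.

Section OrderedPairs.
Local Open Scope ring_scope.

Lemma base_poly_ordered (T : finType) (e : rel T) (p q : nat) :
  p != q -> (forall u v, dist e u v = dist e v u) ->
  base_poly e p q =
    \sum_(u | deg e u == p) \sum_(v | deg e v == q) 'X^(dist e u v).
Proof.
move=> neq_pq dist_sym.
pose f (uv : T * T) : {poly int} :=
  if (deg e uv.1 == p) && (deg e uv.2 == q) then 'X^(dist e uv.1 uv.2) else 0.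
pose lt_rank (uv : T * T) := (enum_rank uv.1 < enum_rank uv.2)%N.
have -> : base_poly e p q = \sum_(uv | lt_rank uv) (f uv + f (uv.2, uv.1)).
  rewrite /base_poly big_mkcondr; apply: eq_bigr => -[u v] _; rewrite /f /= dist_sym.
  case: (eqVneq (deg e u) p) => [du|du]; case: (eqVneq (deg e v) q) => [dv|dv];
    case: (eqVneq (deg e u) q) => [du'|du']; case: (eqVneq (deg e v) p) => [dv'|dv'];
    rewrite /= ?(addr0, add0r) //; lia.
transitivity (\sum_uv f uv); last by rewrite pair_big [RHS]big_mkcond.
rewrite big_split [RHS](bigID lt_rank) /=; congr (_ + _).
have swap_inj : injective (fun uv : T * T => (uv.2, uv.1)) by move=> [? ?] [? ?] [-> ->].
rewrite [RHS](reindex_inj swap_inj) [LHS]big_mkcond [RHS]big_mkcond /=.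
apply: eq_bigr => -[u v] _.
rewrite /lt_rank /f /=; case: ltngtP => //= eq_rank.
rewrite -[v](enum_rankK) -(ord_inj eq_rank) enum_rankK.
by case: eqP => //= ->; rewrite (negbTE neq_pq).
Qed.

End OrderedPairs.

Definition ladder_adj (p q : nat * bool) : bool :=
  ((p.2 == q.2) && ((p.1.+1 == q.1) || (q.1.+1 == p.1)))
  || [&& p.2 != q.2, p.1 == q.1 & p.1 %% 3 != 1].

(* Switching rows at a column congruent to 1 mod 3 needs a detour of 2. *)
Definition ladder_dist (p q : nat * bool) : nat :=
  `|p.1 - q.1| + (p.2 != q.2)
  + 2 * [&& p.2 != q.2, p.1 == q.1 & p.1 %% 3 == 1].

Lemma ladder_dist_eq0 p q : (ladder_dist p q == 0) = (q == p).
Proof.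
by case: p q => [x r] [y s]; rewrite /ladder_dist xpair_eqE /=; case: r; case: s; lia.
Qed.

Lemma ladder_distC p q : ladder_dist p q = ladder_dist q p.
Proof. by case: p q => [x r] [y s]; rewrite /ladder_dist /=; case: r; case: s; lia. Qed.

Lemma ladder_dist_adj p q q' :
  ladder_adj q q' -> ladder_dist p q' <= (ladder_dist p q).+1.
Proof.
case: p q q' => [x r] [y s] [z t]; rewrite /ladder_dist /ladder_adj /=.
by case: r; case: s; case: t; lia.
Qed.

Lemma ladder_dist_pred n p q :
  p.1 < 3 * n -> q.1 < 3 * n -> 0 < ladder_dist p q ->
  exists2 q', q'.1 < 3 * n
            & ladder_adj q' q && ((ladder_dist p q').+1 == ladder_dist p q).
Proof.
case: p q => [x r] [z t] /= lt_x lt_z; rewrite /ladder_dist /ladder_adj /= => pos_d.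
case: (boolP ((r != t) && (z %% 3 != 1))) => [rung|no_rung].
  by exists (z, r) => //=; move: rung pos_d; case: r; case: t => /=; lia.
exists (if x < z then z.-1 else z.+1, t) => /=; move: no_rung pos_d;
  by case: r; case: t; case: (ltnP x z); lia.
Qed.

Definition col_offset (j : 'I_6) : nat := nth 0 [:: 1; 2; 2; 1; 0; 0] j.
Definition lower (j : 'I_6) : bool :=
  nth false [:: false; false; true; true; true; false] j.
Definition coord n (u : 'I_n * 'I_6) : nat * bool :=
  (3 * u.1 + col_offset u.2, lower u.2).

Lemma phen_adjE n (u v : 'I_n * 'I_6) :
  phen_adj n u v = ladder_adj (coord u) (coord v).
Proof.
case: u v => [[i lt_in] [j lt_j6]] [[i' lt_i'n] [j' lt_j'6]].
rewrite /phen_adj /ladder_adj /coord /col_offset /lower -val_eqE /=.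
by do 6?[case: j lt_j6 => [|j] lt_j6]; do 6?[case: j' lt_j'6 => [|j'] lt_j'6];
   rewrite //=; lia.
Qed.

Lemma col_offset_lt j : col_offset j < 3.
Proof. by case: j => -[|[|[|[|[|[|]]]]]]. Qed.

Lemma coord_lt n (u : 'I_n * 'I_6) : (coord u).1 < 3 * n.
Proof. have := col_offset_lt u.2; have := ltn_ord u.1; rewrite /=; lia. Qed.

Lemma coord_inj n : injective (@coord n).
Proof.
move=> [[i lt_in] [j lt_j6]] [[i' lt_i'n] [j' lt_j'6]] [eq_col eq_row].
apply/eqP; rewrite xpair_eqE -!val_eqE /=; move: eq_col eq_row.
rewrite /col_offset /lower /=.
by do 6?[case: j lt_j6 => [|j] lt_j6]; do 6?[case: j' lt_j'6 => [|j'] lt_j'6];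
   rewrite //=; lia.
Qed.

Definition coord_ord n (u : 'I_n * 'I_6) : 'I_(3 * n) * bool :=
  (Ordinal (coord_lt u), lower u.2).

Lemma coord_ord_bij n : bijective (@coord_ord n).
Proof.
apply: inj_card_bij; last by rewrite !card_prod !card_ord card_bool; lia.
by move=> u v [eq_col eq_row]; apply: coord_inj; rewrite /coord eq_col eq_row.
Qed.

Lemma big_coord (R : Type) (idx : R) (op : Monoid.com_law idx) n
    (F : nat * bool -> R) :
  \big[op/idx]_(u : 'I_n * 'I_6) F (coord u) =
  \big[op/idx]_(0 <= x < 3 * n) op (F (x, true)) (F (x, false)).
Proof.
rewrite big_mkord.
transitivity (\big[op/idx]_(p : 'I_(3 * n) * bool) F (val p.1, p.2)).
  by rewrite (reindex (@coord_ord n)) //; exact/onW_bij/coord_ord_bij.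
rewrite -(pair_bigA _ (fun x r => F (val x, r))).
by apply: eq_bigr => x _; rewrite big_bool.
Qed.

Lemma coord_surj n (p : nat * bool) :
  p.1 < 3 * n -> exists u : 'I_n * 'I_6, coord u = p.
Proof.
case: p => x r lt_x; have [g _ gK] := coord_ord_bij n.
by exists (g (Ordinal lt_x, r)); have [] := gK (Ordinal lt_x, r); rewrite /coord => -> ->.
Qed.

Lemma dist_phen n (u v : 'I_n * 'I_6) :
  dist (phen_adj n) u v = ladder_dist (coord u) (coord v).
Proof.
apply: (dist_potential (D := fun w => ladder_dist (coord u) (coord w))).
- by move=> w; rewrite ladder_dist_eq0 (inj_eq (@coord_inj n)).
- by move=> w w'; rewrite phen_adjE; apply: ladder_dist_adj.
- move=> w /(ladder_dist_pred (coord_lt u) (coord_lt w)).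
  case=> q lt_q /andP[adj_q /eqP dq].
  by have [w' def_q] := coord_surj lt_q; exists w'; rewrite ?phen_adjE def_q.
- have := coord_lt u; have := coord_lt v; rewrite card_prod !card_ord /ladder_dist.
  by case: (coord u) (coord v) => [x r] [y s] /=; case: r; case: s; lia.
Qed.

Definition deg3_col n x := [&& x %% 3 != 1, 0 < x & x < 3 * n - 1].

Lemma sum_nat_eq_indicator m N a (c : bool) :
  \sum_(m <= x < N) ((x == a) && c : nat) = (m <= a < N) && c.
Proof.
rewrite (eq_bigr (fun x => if x == a then c : nat else 0)); last first.
  by move=> x _; case: eqP.
by rewrite -big_mkcond big_nat1_eq; case: ifP.
Qed.

Lemma deg_phen n (u : 'I_n * 'I_6) :
  deg (phen_adj n) u = 2 + deg3_col n (coord u).1.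
Proof.
rewrite /deg -sum1_card big_mkcond.
under eq_bigr do rewrite inE phen_adjE.
rewrite (big_coord _ _ (fun p => if ladder_adj (coord u) p then 1 else 0)).
have := coord_lt u; case: (coord u) => x r /= lt_x.
rewrite (eq_bigr (fun y => ((y == x.-1) && (0 < x) : nat)
                            + ((y == x.+1) && true : nat)
                            + ((y == x) && (x %% 3 != 1) : nat))); last first.
  by move=> y _; rewrite /ladder_adj /=; case: r; do 2 case: ifP; lia.
by rewrite !big_split /= !sum_nat_eq_indicator /deg3_col; lia.
Qed.

Lemma big_nat_mul3 (R : Type) (idx : R) (op : Monoid.com_law idx) n
    (F : nat -> R) :
  \big[op/idx]_(0 <= x < 3 * n) F x =
  \big[op/idx]_(0 <= i < n) op (op (F (3 * i)) (F (3 * i + 1))) (F (3 * i + 2)).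
Proof.
rewrite mulnC big_nat_mul; apply: eq_bigr => i _.
rewrite mulSn mulnC addnC addn3.
by rewrite 3?big_nat_recr //= ?leqW // big_geq // Monoid.mul1m addn1 addn2.
Qed.

Lemma deg3_col_mul3 n i : deg3_col n (3 * i) = (0 < i < n).
Proof. by rewrite /deg3_col; lia. Qed.

Lemma deg3_col_mul3D1 n i : deg3_col n (3 * i + 1) = false.
Proof. by rewrite /deg3_col; lia. Qed.

Lemma deg3_col_mul3D2 n i : deg3_col n (3 * i + 2) = (i.+1 < n).
Proof. by rewrite /deg3_col; lia. Qed.

Local Open Scope ring_scope.

Section ColumnSums.
Variables (V : nmodType) (m : nat) (F : nat -> V).

Lemma sum_non_deg3_col :
  \sum_(0 <= x < 3 * m.+1 | ~~ deg3_col m.+1 x) F x =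
  F 0 + F (3 * m + 2) + \sum_(0 <= i < m.+1) F (3 * i + 1).
Proof.
rewrite big_mkcond big_nat_mul3.
under eq_bigr do
  rewrite deg3_col_mul3 deg3_col_mul3D1 deg3_col_mul3D2 ltnS /=.
rewrite !big_split /= [X in X + _ + _]big_nat_recl // [X in _ + X]big_nat_recr //=.
rewrite ltnn muln0 [X in _ + X + _ + _ = _]big1_seq ?[X in _ + (X + _) = _]big1_seq.
- by rewrite addr0 add0r addrAC.
all: by move=> i; rewrite mem_iota /= subn0 add0n ?ltnS => ->.
Qed.

Lemma sum_deg3_col :
  \sum_(0 <= y < 3 * m.+1 | deg3_col m.+1 y) F y =
  \sum_(0 <= j < m) (F (3 * j + 2) + F (3 * j + 3)).
Proof.
rewrite big_mkcond big_nat_mul3.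
under eq_bigr do
  rewrite deg3_col_mul3 deg3_col_mul3D1 deg3_col_mul3D2 ltnS /=.
rewrite !big_split /= [X in X + _ + _]big_nat_recl // [X in _ + X]big_nat_recr //= ltnn.
rewrite big1_eq add0r !addr0 addrC; congr (_ + _).
all: apply: eq_big_nat => i /andP[_ lt_im].
- by rewrite ltnS lt_im.
- by rewrite lt_im mulnS addnC.
Qed.

End ColumnSums.

Definition nonmul3_poly m : {poly int} :=
  \sum_(0 <= s < m) ('X^(3 * s + 1) + 'X^(3 * s + 2)).

Definition deg3_gaps n x : {poly int} :=
  \sum_(0 <= y < 3 * n | deg3_col n y) 'X^`|x - y|%N.

Definition col_sum n : {poly int} :=
  \sum_(0 <= x < 3 * n | ~~ deg3_col n x) deg3_gaps n x.

Lemma ladder_dist_cross x y r s :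
  x != y -> ladder_dist (x, r) (y, s) = (`|x - y| + (r != s))%N.
Proof. by move/negbTE=> neq_xy; rewrite /ladder_dist /= neq_xy andbF muln0 addn0. Qed.

Lemma base_poly_phen n : base_poly (phen_adj n) 2 3 = (2 + 2 * 'X) * col_sum n.
Proof.
rewrite base_poly_ordered //; last by move=> u v; rewrite !dist_phen ladder_distC.
pose G p q : {poly int} :=
  if ~~ deg3_col n p.1 && deg3_col n q.1 then 'X^(ladder_dist p q) else 0.
transitivity (\sum_(u : 'I_n * 'I_6) \sum_(v : 'I_n * 'I_6) G (coord u) (coord v)).
  rewrite big_mkcond; apply: eq_bigr => u _; rewrite deg_phen /G.
  case: deg3_col => /=; first by rewrite big1.
  rewrite big_mkcond; apply: eq_bigr => v _.
  by rewrite deg_phen dist_phen; case: deg3_col.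
rewrite (eq_bigr _ (fun u _ => big_coord _ _ (G (coord u)))).
rewrite (big_coord _ _
  (fun p => \sum_(0 <= y < 3 * n) (G p (y, true) + G p (y, false)))).
rewrite /col_sum mulr_sumr [in RHS]big_mkcond /=; apply: eq_bigr => x _; rewrite /G /=.
case: (boolP (deg3_col n x)) => /= [_|x2]; first by rewrite !big1 ?mulr0 ?addr0.
rewrite -big_split /deg3_gaps [in RHS]big_mkcond mulr_sumr; apply: eq_bigr => y _ /=.
case: (boolP (deg3_col n y)) => [y3|_]; last by rewrite !addr0 mulr0.
have neq_xy : x != y by apply: contraNneq x2 => ->.
by rewrite !ladder_dist_cross //= addn0 addn1 exprS; ring.
Qed.

Lemma deg3_gaps_first m : deg3_gaps m.+1 0 = 'X * nonmul3_poly m.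
Proof.
rewrite /deg3_gaps sum_deg3_col mulr_sumr; apply: eq_bigr => j _.
by rewrite mulrDr -!exprS; congr ('X^_ + 'X^_); lia.
Qed.

Lemma deg3_gaps_last m : deg3_gaps m.+1 (3 * m + 2) = 'X * nonmul3_poly m.
Proof.
rewrite /deg3_gaps sum_deg3_col mulr_sumr big_nat_rev.
apply: eq_big_nat => j /andP[_ lt_jm].
by rewrite mulrDr -!exprS addrC; congr ('X^_ + 'X^_); lia.
Qed.

Lemma deg3_gaps_mid m i : (i <= m)%N ->
  deg3_gaps m.+1 (3 * i + 1) = nonmul3_poly i + nonmul3_poly (m - i).
Proof.
move=> le_im; rewrite /deg3_gaps sum_deg3_col (big_cat_nat (leq0n i) le_im) /=.
congr (_ + _).
  rewrite big_nat_rev; apply: eq_big_nat => j /andP[_ lt_ji].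
  by rewrite addrC; congr ('X^_ + 'X^_); lia.
rewrite -{1}[i]add0n big_addn; apply: eq_big_nat => j /andP[_ lt_j].
by congr ('X^_ + 'X^_); lia.
Qed.

Lemma col_sumE m : col_sum m.+1 =
  2 * ('X * nonmul3_poly m) + 2 * \sum_(0 <= i < m.+1) nonmul3_poly i.
Proof.
rewrite /col_sum sum_non_deg3_col deg3_gaps_first deg3_gaps_last.
rewrite (eq_big_nat _ _ (F2 := fun i => nonmul3_poly i + nonmul3_poly (m - i)));
  last first.
  by move=> i /andP[_ lt_im]; apply: deg3_gaps_mid.
rewrite big_split /=.
have -> : \sum_(0 <= i < m.+1) nonmul3_poly (m - i) =
           \sum_(0 <= i < m.+1) nonmul3_poly i.
  rewrite big_nat_rev; apply: eq_big_nat => i /andP[_ lt_im].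
  by congr nonmul3_poly; lia.
by ring.
Qed.

Lemma sum_nonmul3_poly m : \sum_(0 <= i < m.+1) nonmul3_poly i =
  \sum_(0 <= s < m) (m - s)%:R * ('X^(3 * s + 1) + 'X^(3 * s + 2)).
Proof.
elim: m => [|m IHm]; first by rewrite big_nat1 /nonmul3_poly !big_geq.
rewrite big_nat_recr //= IHm [RHS]big_nat_recr //= subSnn mul1r.
rewrite /nonmul3_poly [X in _ + X = _]big_nat_recr //= addrA -big_split /=; congr (_ + _).
apply: eq_big_nat => s /andP[_ lt_sm].
by rewrite subSn 1?ltnW // mulrSr mulrDl mul1r.
Qed.

(* Both sides of the theorem, regrouped by the exponents 3s+1, ..., 3s+4. *)
Definition phen_block p s : {poly int} :=
  (4 * (p.+1 - s))%N%:R * 'X^(3 * s + 1)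
  + (4 * (2 * (p.+1 - s) + 1))%N%:R * 'X^(3 * s + 2)
  + (4 * (p.+1 - s + 2))%N%:R * 'X^(3 * s + 3) + 4 * 'X^(3 * s + 4).

Lemma gap_product_blocks p :
  (2 + 2 * 'X) * (2 * ('X * nonmul3_poly p.+1)
    + 2 * \sum_(0 <= s < p.+1) (p.+1 - s)%:R * ('X^(3 * s + 1) + 'X^(3 * s + 2)))
  = \sum_(0 <= s < p.+1) phen_block p s.
Proof.
rewrite /nonmul3_poly !mulr_sumr -big_split mulr_sumr; apply: eq_bigr => s _.
by rewrite /phen_block /= !exprD; ring.
Qed.

Lemma scale_natX (k l e f : nat) :
  k = l -> e = f -> k%:R *: 'X^e = l%:R * 'X^f :> {poly int}.
Proof. by move=> -> ->; rewrite scaler_nat mulr_natl. Qed.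

Lemma phenylene_formula_blocks p :
  (2 * (2 * p.+2 - 2))%N%:R *: 'X
  + \sum_(2 <= k < p.+2) (4 * (p.+2 - k + 1))%N%:R *: 'X^(3 * k - 2)
  + \sum_(1 <= k < p.+2) (4 * (2 * p.+2 - 2 * k + 1))%N%:R *: 'X^(3 * k - 1)
  + \sum_(1 <= k < p.+2) (4 * (p.+2 - k + 2))%N%:R *: 'X^(3 * k)
  + 4%:R *: 'X^(3 * p.+2 - 2)
  = \sum_(0 <= s < p.+1) phen_block p s.
Proof.
have sumA : (2 * (2 * p.+2 - 2))%N%:R *: 'X =
             (4 * (p.+1 - 0))%N%:R * 'X^(3 * 0 + 1) :> {poly int}.
  by rewrite -[X in _ *: X]expr1; apply: scale_natX; lia.
have sumB : \sum_(2 <= k < p.+2) (4 * (p.+2 - k + 1))%N%:R *: 'X^(3 * k - 2) =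
    \sum_(0 <= s < p)
      ((4 * (p.+1 - s.+1))%N%:R * 'X^(3 * s.+1 + 1) + 4 * 'X^(3 * s + 4))
    :> {poly int}.
  rewrite !big_add1 /=; apply: eq_big_nat => s _.
  rewrite (_ : 3 * s.+1 + 1 = 3 * s + 4)%N -?mulrDl -?natrD; last by lia.
  by apply: scale_natX; lia.
have sumC : \sum_(1 <= k < p.+2) (4 * (2 * p.+2 - 2 * k + 1))%N%:R *: 'X^(3 * k - 1) =
    \sum_(0 <= s < p.+1) (4 * (2 * (p.+1 - s) + 1))%N%:R * 'X^(3 * s + 2) :> {poly int}.
  by rewrite big_add1 /=; apply: eq_big_nat => s _; apply: scale_natX; lia.
have sumD : \sum_(1 <= k < p.+2) (4 * (p.+2 - k + 2))%N%:R *: 'X^(3 * k) =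
    \sum_(0 <= s < p.+1) (4 * (p.+1 - s + 2))%N%:R * 'X^(3 * s + 3) :> {poly int}.
  by rewrite big_add1 /=; apply: eq_big_nat => s _; apply: scale_natX; lia.
have sumE : 4%:R *: 'X^(3 * p.+2 - 2) = 4 * 'X^(3 * p + 4) :> {poly int}.
  by apply: scale_natX; lia.
rewrite sumA sumB sumC sumD sumE /phen_block !big_split /=.
rewrite [X in _ = X + _ + _ + _]big_nat_recl // [X in _ = _ + X]big_nat_recr //=.
ring.
Qed.

Theorem theorem2p2 (n : nat) (hn : (2 <= n)%N) :
  base_poly (phen_adj n) 2 3 =
    (2 * (2 * n - 2))%N%:R *: 'X
    + \sum_(2 <= k < n) (4 * (n - k + 1))%N%:R *: 'X^(3 * k - 2)
    + \sum_(1 <= k < n) (4 * (2 * n - 2 * k + 1))%N%:R *: 'X^(3 * k - 1)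
    + \sum_(1 <= k < n) (4 * (n - k + 2))%N%:R *: 'X^(3 * k)
    + 4%:R *: 'X^(3 * n - 2).
Proof.
case: n hn => [|[|p]] // _.
rewrite base_poly_phen col_sumE sum_nonmul3_poly.
by rewrite gap_product_blocks phenylene_formula_blocks.
Qed.
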